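(* Let $G=(X,\Sigma,\delta,X_0)$ be an NFA with observable events $\Sigma_o$ and a nonempty set of secret states $X_S\subseteq X$. Then $G$ is Inf-SSO w.r.t. $\Sigma_o$ and $X_S$ if and only if $G$ is $(|\hat X|\,2^{|X\setminus X_S|}-1)$-SSO w.r.t. $\Sigma_o$ and $X_S$, where $\hat X$ is the set of states of $G$ reachable from $X_S$.
   Context: An NFA is $G=(X,\Sigma,\delta,X_0)$ with finite state set $X$, finite event set $\Sigma$, initial states $X_0\subseteq X$, and transition function $\delta:X\times\Sigma\to 2^X$ extended to strings in the usual way. $\Sigma=\Sigma_o\dot\cup\Sigma_{uo}$, and $P:\Sigma^*\to\Sigma_o^*$ is the natural projection erasing unobservable events. $X_{NS}=X\setminus X_S$. A run $x_0\xrightarrow{s_1}x_1\cdots\xrightarrow{s_n}x_n$ means $x_{k+1}\in\delta(x_k,s_{k+1})$, written $x_0\xrightarrow{s}x_n$; it is non-secret if all its states lie in $X_{NS}$. $\hat X$ is the set of states $x$ with $x\in\delta(x_s,w)$ for some $x_s\in X_S$, $w\in\Sigma^*$ (including $X_S$ itself). $K$-SSO ($K\in\mathbb N$): $G$ is strongly $K$-step opaque w.r.t. $\Sigma_o$ and $X_S$ if for every run $x_0\xrightarrow{s}x_s\xrightarrow{t}x_t$ with $x_0\in X_0$, $x_s\in X_S$, $|P(t)|\le K$, there exists a run $x_0'\xrightarrow{s'}x_s'\xrightarrow{t'}x_t'$ with $x_0'\in X_0$, $P(s')=P(s)$, $P(t')=P(t)$, and the subrun $x_s'\xrightarrow{t'}x_t'$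 non-secret. Inf-SSO (strong infinite-step opacity): the same condition required for all such runs with no bound on $|P(t)|$, i.e. $G$ is $K$-SSO for every $K\in\mathbb N$. *)

From mathcomp Require Import all_boot.
Set Implicit Arguments. Unset Strict Implicit. Unset Printing Implicit Defensive.

(* An NFA G = (X, Sigma, delta, X0); the partition Sigma = Sigma_o (+) Sigma_uo
   is given by a boolean predicate [obs] (Sigma_o = [pred e | obs e]). *)
Record nfa := NFA {
  stT : finType;
  evT : finType;
  delta : stT -> evT -> {set stT};
  init : {set stT}
}.

Section Runs.
Variable G : nfa.
Local Notation X := (stT G).
Local Notation E := (evT G).

(* A run x0 -s1-> x1 ... -sn-> xn is encoded by its start state x0 and the
   sequence of steps (s_{k+1}, x_{k+1}). *)
Fixpoint is_run (x : X) (r : seq (E * X)) : bool :=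
  if r is (e, y) :: r' then (y \in @delta G x e) && is_run y r' else true.

Definition run_word (r : seq (E * X)) : seq E := map fst r.
Definition run_end (x : X) (r : seq (E * X)) : X := last x (map snd r).
Definition run_states (x : X) (r : seq (E * X)) : seq X := x :: map snd r.

Definition proj (obs : pred E) (w : seq E) : seq E := filter obs w.

Definition step_rel : rel X := fun x y => [exists e, y \in @delta G x e].

(* hat X: states x with x in delta(x_s, w) for some x_s in X_S, w in Sigma^*
   (w = empty gives X_S itself); reachability = reflexive-transitive closure *)
Definition reach_from (XS : {set X}) : {set X} :=
  [set x | [exists xs in XS, connect step_rel xs x]].

Definition K_SSO (obs : pred E) (XS : {set X}) (K : nat) : Prop :=
  forall (x0 : X) (rs : seq (E * X)) (rt : seq (E * X)),
    x0 \in @init G -> is_run x0 rs -> run_end x0 rs \in XS ->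
    is_run (run_end x0 rs) rt -> size (proj obs (run_word rt)) <= K ->
    exists (x0' : X) (rs' rt' : seq (E * X)),
      [/\ x0' \in @init G, is_run x0' rs', is_run (run_end x0' rs') rt' &
        [/\ proj obs (run_word rs') = proj obs (run_word rs),
          proj obs (run_word rt') = proj obs (run_word rt) &
          all (fun y => y \notin XS) (run_states (run_end x0' rs') rt')]].

Definition Inf_SSO (obs : pred E) (XS : {set X}) : Prop :=
  forall K : nat, K_SSO obs XS K.
End Runs.

From mathcomp Require Import all_boot zify.
From Stdlib Require Import ClassicalEpsilon.

Set Implicit Arguments. Unset Strict Implicit. Unset Printing Implicit Defensive.

(* Cut a long run after each of its first observed events and record, at every
   cut, the current state together with the set of states reachable by
   non-secret continuations that are observationally equivalent so far.  These
   pairs live in [hat X] times the nonempty subsets of [X \ X_S], so a run with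
   more observed events than there are such pairs repeats a pair at two cuts.
   Removing the segment between them shortens the run without changing either
   the reachability of its continuation or the set of masking estimates, so
   opacity for short runs propagates to all runs by induction on the number of
   observed events. *)

Lemma ord_collision (T : finType) (A : {set T}) n (f : 'I_n -> T) :
  (forall k, f k \in A) -> #|A| < n -> exists i j : 'I_n, i < j /\ f i = f j.
Proof.
move=> fA ltAn.
have /injectivePn[i [j neq_ij fij]] : ~~ injectiveb f.
  apply/injectiveP => f_inj.
  have sub_fA : f @: [set: 'I_n] \subset A by apply/subsetP => _ /imsetP[k _ ->].
  by move: (subset_leq_card sub_fA); rewrite card_imset // cardsT card_ord leqNgt ltAn.
case: (ltngtP i j) => [lt_ij | lt_ji | /val_inj eq_ij].
- by exists i, j.
- by exists j, i.
- by rewrite eq_ij eqxx in neq_ij.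
Qed.

Fixpoint take_count (T : Type) (p : pred T) (k : nat) (s : seq T) {struct s}
  : seq T :=
  match k, s with
  | 0, _ | _, [::] => [::]
  | k'.+1, x :: s' => x :: take_count p (if p x then k' else k) s'
  end.

Lemma take_count_prefix (T : Type) (p : pred T) k (s : seq T) :
  exists s', s = take_count p k s ++ s'.
Proof.
elim: s k => [|x s IHs] [|k] /=; try by eexists.
by case: (IHs (if p x then k else k.+1)) => s' {1}->; exists s'.
Qed.

Lemma count_take_count (T : Type) (p : pred T) k (s : seq T) :
  count p (take_count p k s) = minn k (count p s).
Proof.
elim: s k => [|x s IHs] [|k] //=; first by rewrite min0n.
by case: (p x); rewrite IHs ?minnSS.
Qed.

Section Runs.
Variable G : nfa.
Local Notation X := (stT G).
Local Notation E := (evT G).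
Implicit Types (x : X) (r : seq (E * X)).

Lemma is_run_cat x r1 r2 :
  is_run x (r1 ++ r2) = is_run x r1 && is_run (run_end x r1) r2.
Proof. by elim: r1 x => [|[e y] r1 IHr] x //=; rewrite IHr andbA. Qed.

Lemma run_end_cat x r1 r2 : run_end x (r1 ++ r2) = run_end (run_end x r1) r2.
Proof. by rewrite /run_end map_cat last_cat. Qed.

Lemma run_states_cat x r1 r2 :
  run_states x (r1 ++ r2) = run_states x r1 ++ map snd r2.
Proof. by rewrite /run_states map_cat. Qed.

Lemma run_end_in_states x r : run_end x r \in run_states x r.
Proof. exact: mem_last. Qed.

Lemma connect_run_end x r : is_run x r -> connect (@step_rel G) x (run_end x r).
Proof.
elim: r x => [|[e y] r IHr] x /=; first by rewrite connect0.
case/andP=> y_xe run_r; apply: connect_trans (IHr _ run_r).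
by apply: connect1; apply/existsP; exists e.
Qed.

Variable obs : pred E.

Lemma proj_run_word_cat r1 r2 :
  proj obs (run_word (r1 ++ r2)) = proj obs (run_word r1) ++ proj obs (run_word r2).
Proof. by rewrite /proj /run_word map_cat filter_cat. Qed.

Lemma size_proj_run_word r : size (proj obs (run_word r)) = count (obs \o fst) r.
Proof. by rewrite size_filter count_map. Qed.

Lemma proj_run_word_split r w1 w2 :
  proj obs (run_word r) = w1 ++ w2 ->
  exists r1 r2, [/\ r = r1 ++ r2, proj obs (run_word r1) = w1 &
                    proj obs (run_word r2) = w2].
Proof.
elim: r w1 => [|[e y] r IHr] [|a w1] //.
- by case: w2 => // _; exists [::], [::].
- by move=> obs_w2; exists [::], ((e, y) :: r).
have proj_cons r' : proj obs (run_word ((e, y) :: r')) =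
    (if obs e then [:: e] else [::]) ++ proj obs (run_word r').
  by rewrite /proj /run_word /=; case: (obs e).
rewrite proj_cons; case obs_e: (obs e) => /=.
  case=> <- /IHr[r1 [r2 [-> <- <-]]].
  by exists ((e, y) :: r1), r2; rewrite proj_cons obs_e.
move/(IHr (a :: w1))=> [r1 [r2 [-> obs_r1 <-]]].
by exists ((e, y) :: r1), r2; rewrite proj_cons obs_e obs_r1.
Qed.

End Runs.

Section Opacity.
Variables (G : nfa) (obs : pred (evT G)) (XS : {set stT G}).
Local Notation X := (stT G).
Local Notation E := (evT G).
Implicit Types (x y : X) (r : seq (E * X)) (ps w : seq E).

Definition nonsecret_run x r w y : Prop :=
  [/\ is_run x r, proj obs (run_word r) = w, run_end x r = y &
      all (fun z => z \notin XS) (run_states x r)].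

Definition nonsecret_reachable ps w y : Prop :=
  exists x0 rs r, [/\ x0 \in @init G, is_run x0 rs, proj obs (run_word rs) = ps &
                      nonsecret_run (run_end x0 rs) r w y].

Definition estimate ps w : {set X} :=
  [set y | if excluded_middle_informative (nonsecret_reachable ps w y)
           then true else false].

Lemma estimateP ps w y : reflect (nonsecret_reachable ps w y) (y \in estimate ps w).
Proof. by rewrite inE; case: excluded_middle_informative => h; constructor. Qed.

Lemma estimate_sub_nonsecret ps w : estimate ps w \subset ~: XS.
Proof.
apply/subsetP => y /estimateP[x0 [rs [r [_ _ _ [_ _ <- ns_r]]]]].
by rewrite inE (allP ns_r _ (run_end_in_states _ _)).
Qed.

Lemma estimate_catl_subset ps w1 w2 u :
  estimate ps w1 = estimate ps w2 ->
  estimate ps (w1 ++ u) \subset estimate ps (w2 ++ u).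
Proof.
move=> est_w12; apply/subsetP => y /estimateP[x0 [rs [r [x0_init run_rs obs_rs]]]].
case=> run_r /proj_run_word_split[r1 [r2 [r_eq obs_r1 obs_r2]]] end_r ns_r.
move: run_r end_r ns_r; rewrite r_eq is_run_cat run_states_cat all_cat.
move=> /andP[run_r1 run_r2] end_r /andP[ns_r1 ns_r2].
have : run_end (run_end x0 rs) r1 \in estimate ps w2.
  by rewrite -est_w12; apply/estimateP; exists x0, rs, r1.
case/estimateP=> x0' [rs' [r1' [x0'_init run_rs' obs_rs' [run_r1' obs_r1' end_r1' ns_r1']]]].
apply/estimateP; exists x0', rs', (r1' ++ r2); split => //; split.
- by rewrite is_run_cat run_r1' end_r1'.
- by rewrite proj_run_word_cat obs_r1' obs_r2.
- by rewrite run_end_cat end_r1' -run_end_cat.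
- by rewrite run_states_cat all_cat ns_r1'.
Qed.

Definition opaque_upto n : Prop :=
  forall x0 rs rt, x0 \in @init G -> is_run x0 rs -> run_end x0 rs \in XS ->
    is_run (run_end x0 rs) rt -> size (proj obs (run_word rt)) <= n ->
    estimate (proj obs (run_word rs)) (proj obs (run_word rt)) != set0.

Lemma K_SSO_opaque_upto K : K_SSO obs XS K <-> opaque_upto K.
Proof.
split=> sso x0 rs rt x0_init run_rs end_rs run_rt obs_rt.
  have [x0' [rs' [rt' [x0'_init run_rs' run_rt' [obs_rs' obs_rt' ns_rt']]]]] :=
    sso x0 rs rt x0_init run_rs end_rs run_rt obs_rt.
  apply/set0Pn; exists (run_end (run_end x0' rs') rt').
  by apply/estimateP; exists x0', rs', rt'.
have /set0Pn[y /estimateP[x0' [rs' [rt' [x0'_init run_rs' obs_rs']]]]] :=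
  sso x0 rs rt x0_init run_rs end_rs run_rt obs_rt.
by case=> run_rt' obs_rt' _ ns_rt'; exists x0', rs', rt'.
Qed.

Lemma opaque_upto_le m n : m <= n -> opaque_upto n -> opaque_upto m.
Proof.
move=> le_mn opaque_n x0 rs rt x0_init run_rs end_rs run_rt obs_rt.
exact: (opaque_n x0 rs rt) (leq_trans obs_rt le_mn).
Qed.

Lemma opaque_upto_cut_loop n x0 rs p1 p2 r :
  opaque_upto n -> x0 \in @init G -> is_run x0 rs -> run_end x0 rs \in XS ->
  is_run (run_end x0 rs) p1 -> is_run (run_end x0 rs) (p2 ++ r) ->
  run_end (run_end x0 rs) p1 = run_end (run_end x0 rs) p2 ->
  estimate (proj obs (run_word rs)) (proj obs (run_word p1)) =
    estimate (proj obs (run_word rs)) (proj obs (run_word p2)) ->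
  size (proj obs (run_word (p1 ++ r))) <= n ->
  estimate (proj obs (run_word rs)) (proj obs (run_word (p2 ++ r))) != set0.
Proof.
move=> opaque_n x0_init run_rs end_rs run_p1.
rewrite is_run_cat => /andP[_ run_r] end_p12 est_p12 obs_p1r.
have : estimate (proj obs (run_word rs)) (proj obs (run_word (p1 ++ r))) != set0.
  by apply: (opaque_n x0 rs) => //; rewrite is_run_cat run_p1 end_p12.
rewrite !proj_run_word_cat; apply: contra_neq => est_p2r.
by apply/eqP; rewrite -subset0 -est_p2r estimate_catl_subset.
Qed.

Lemma opaque_upto_succ n :
  #|reach_from XS| * (2 ^ #|~: XS| - 1) <= n ->
  opaque_upto n -> opaque_upto n.+1.
Proof.
move=> card_le opaque_n x0 rs rt x0_init run_rs end_rs run_rt.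
set sz := size _; rewrite leq_eqVlt ltnS => /predU1P[sz_eq | le_sz_n]; last first.
  exact: (opaque_n x0 rs rt).
set xs := run_end x0 rs; set ps := proj obs (run_word rs).
pose cut k := take_count (obs \o fst) k rt.
have run_cut k : is_run xs (cut k).
  have [s rt_eq] := take_count_prefix (obs \o fst) k rt.
  by move: run_rt; rewrite {1}rt_eq is_run_cat => /andP[].
have obs_cut (k : 'I_sz) : size (proj obs (run_word (cut k))) = k.
  rewrite !size_proj_run_word count_take_count -size_proj_run_word.
  exact/minn_idPl/ltnW.
pose f (k : 'I_sz) := (run_end xs (cut k), estimate ps (proj obs (run_word (cut k)))).
pose pairs := setX (reach_from XS) (powerset (~: XS) :\ set0).
have f_pairs k : f k \in pairs.
  rewrite !inE /= estimate_sub_nonsecret andbT; apply/andP; split.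
    by apply/existsP; exists xs; rewrite end_rs connect_run_end.
  by apply: (opaque_n x0 rs) => //; rewrite obs_cut -ltnS -sz_eq.
have card_pairs : #|pairs| = #|reach_from XS| * (2 ^ #|~: XS| - 1).
  have := cardsD1 set0 (powerset (~: XS)).
  by rewrite card_powerset powersetE sub0set add1n cardsX => ->; rewrite subn1.
have lt_pairs : #|pairs| < sz by rewrite card_pairs sz_eq ltnS.
have [i [j [lt_ij [end_ij est_ij]]]] := ord_collision f_pairs lt_pairs.
have [rest rt_j] := take_count_prefix (obs \o fst) j rt.
have obs_rest : size (proj obs (run_word rest)) + j = sz.
  by rewrite -(obs_cut j) addnC -size_cat -proj_run_word_cat -rt_j.
rewrite rt_j in run_rt *.
apply: (opaque_upto_cut_loop opaque_n x0_init run_rs end_rs (run_cut i) run_rt) => //.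
by rewrite proj_run_word_cat size_cat obs_cut; lia.
Qed.

Lemma opaque_upto_all K :
  #|reach_from XS| * (2 ^ #|~: XS| - 1) <= K ->
  opaque_upto K -> forall n, opaque_upto n.
Proof.
move=> card_le opaque_K n; apply: (@opaque_upto_le n (K + n)); first exact: leq_addl.
elim: n => [|n IHn]; first by rewrite addn0.
by rewrite addnS; apply: opaque_upto_succ => //; apply: leq_trans card_le (leq_addr _ _).
Qed.

End Opacity.

Theorem corollary3p2 (G : nfa) (obs : pred (evT G)) (XS : {set stT G}) :
  XS != set0 ->
  (Inf_SSO obs XS <->
   K_SSO obs XS (#|reach_from XS| * 2 ^ #|~: XS| - 1)).
Proof.
move=> /set0Pn[xs xs_secret]; split=> [inf_sso | /K_SSO_opaque_upto opaque_K n].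
  exact: inf_sso.
have reach_gt0 : 0 < #|reach_from XS|.
  apply/card_gt0P; exists xs.
  by rewrite inE; apply/existsP; exists xs; rewrite xs_secret connect0.
apply/K_SSO_opaque_upto; apply: opaque_upto_all opaque_K n.
by rewrite mulnBr muln1 leq_sub2l.
Qed.
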